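(* The $(1+1)$-type unbiased black-box complexity of the $\mathrm{DLB}$ problem is $O(n^2)$: there exists a $(1+1)$-type unary unbiased black-box algorithm whose expected runtime on $\mathrm{DLB}:\{0,1\}^n\to\mathbb{R}$ is $O(n^2)$.
   Context: Let $n$ be an even positive integer. For $x\in\{0,1\}^n$ consider the blocks $(x_{2\ell+1},x_{2\ell+2})$, $\ell=0,\dots,\frac n2-1$. If $x\neq(1,\dots,1)$, let $m$ be the smallest $\ell$ with $x_{2\ell+1}\neq 1$ or $x_{2\ell+2}\neq 1$, and define $\mathrm{DLB}(x)=2m+1$ if $x_{2m+1}+x_{2m+2}=0$ and $\mathrm{DLB}(x)=2m$ if $x_{2m+1}+x_{2m+2}=1$; set $\mathrm{DLB}(1,\dots,1)=n$. A unary unbiased variation operator $V$ assigns to each $x\in\{0,1\}^n$ a probability distribution $V(x)$ on $\{0,1\}^n$ such that for all $x,y,z$, $\Pr[y=V(x)]=\Pr[y\oplus z=V(x\oplus z)]$, and for all permutations $\sigma$ of $[1..n]$, $\Pr[y=V(x)]=\Pr[\sigma(y)=V(\sigma(x))]$, where $\sigma(x)=(x_{\sigma(1)},\dots,x_{\sigma(n)})$. A $(1+1)$-type unbiased black-box algorithm keeps a single current search point, initially uniformly random; in each iteration it produces one new search point by applying a unary unbiased variation operator to the current point, evaluates it, and decides whether to replace the current point by the new one; all choices (operator and acceptance) depend only on the fitness values observed so far. The runtime is the number of fitness evaluations until (and including) the first evaluation of an optimum; the complexity is the infimum of the expected runtime over all such algorithms. *)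

From HB Require Import structures.
From mathcomp Require Import all_boot all_order all_algebra all_fingroup.
From mathcomp Require Import all_classical all_reals all_analysis.
Set Implicit Arguments. Unset Strict Implicit. Unset Printing Implicit Defensive.
Import Order.TTheory GRing.Theory Num.Theory.
Local Open Scope ring_scope.

Definition bits (n : nat) := {ffun 'I_n -> bool}.

(* k-th bit (0-based), false if out of range *)
Definition bit (n : nat) (x : bits n) (k : nat) : bool :=
  oapp x false (insub k : option 'I_n).

Definition bxor (n : nat) (x z : bits n) : bits n := [ffun i => x i (+) z i].

Definition bperm (n : nat) (s : {perm 'I_n}) (x : bits n) : bits n :=
  [ffun i => x (s i)].

(* DLB, translated to 0-based indices: block l is (x_{2l}, x_{2l+1}). *)
Definition DLB (n : nat) (x : bits n) : nat :=
  if [forall i, x i] then n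
  else
    let m := find (fun l => ~~ (bit x l.*2 && bit x l.*2.+1)) (iota 0 n./2) in
    if ~~ bit x m.*2 && ~~ bit x m.*2.+1 then m.*2.+1 else m.*2.

(* A unary operator V: V x y = Pr[y = V(x)]. *)
Definition unary_unbiased (R : realType) (n : nat) (V : bits n -> bits n -> R) : Prop :=
  [/\ (forall x y, 0 <= V x y),
      (forall x, \sum_(y : bits n) V x y = 1),
      (forall x y z, V x y = V (bxor x z) (bxor y z)) &
      (forall x y (s : {perm 'I_n}), V x y = V (bperm s x) (bperm s y))].

(* A (1+1)-type unbiased black-box algorithm: the operator used in the next
   iteration and the acceptance decision are functions of the sequence of
   fitness values observed so far (oldest first).  [op h] is the operator used
   when the observed fitness history is h; [accept h'] decides, with h' the
   history including the new offspring's fitness (last entry), whether the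
   offspring replaces the current point. *)
Record alg11 (R : realType) (n : nat) := Alg11 {
  op : seq R -> bits n -> bits n -> R;
  accept : seq R -> bool;
  op_unbiased : forall h, unary_unbiased (op h)
}.

Definition is_opt (R : realType) (n : nat) (f : bits n -> R) (y : bits n) : bool :=
  [forall z, f z <= f y].

(* Finitely supported sub-probability distribution over
   (current point, fitness history) restricted to runs that have not yet
   evaluated an optimum; [run_mass A f t] lists weighted states after the
   (t+1)-th evaluation. *)
Fixpoint run_states (R : realType) (n : nat) (A : alg11 R n) (f : bits n -> R)
    (t : nat) : seq (R * (bits n * seq R)) :=
  match t with
  | 0 => [seq ((2%:R ^- n : R), (x, [:: f x])) | x <- enum {: bits n} & ~~ is_opt f x]
  | t'.+1 =>
      flatten [seq
        (let: (w, (x, h)) := s in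
         [seq (let h' := rcons h (f y) in
               (w * op A h x y, (if accept A h' then y else x, h')))
         | y <- enum {: bits n} & ~~ is_opt f y])
      | s <- run_states A f t']
  end.

(* Pr[T > t+1], T = number of evaluations up to and including the first
   evaluation of an optimum *)
Definition prob_not_found (R : realType) (n : nat) (A : alg11 R n) (f : bits n -> R)
    (t : nat) : R :=
  \sum_(s <- run_states A f t) s.1.

(* E[T] = sum_{t >= 0} Pr[T > t] = 1 + sum_{t >= 0} Pr[T > t+1]  (in \bar R) *)
Definition expected_runtime (R : realType) (n : nat) (A : alg11 R n) (f : bits n -> R)
    : \bar R :=
  (1%:E + \sum_(t <oo) (prob_not_found A f t)%:E)%E.

(* The algorithm is randomized local search (flip one uniformly random bit)
   with a fitness-based acceptance rule: with c the fitness of the current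
   point and b that of the offspring, accept iff b >= c + 2, or c is odd and
   b = c - 1.  If the first non-full block m of x holds a single one
   (fitness 2m), flipping its zero completes it and gives fitness >= 2m + 2;
   if it is 00 (fitness 2m + 1), flipping its first bit gives fitness 2m.  So
   every non-optimal point has an accepted one-bit flip.  Accepted moves
   strictly decrease g(c) = n - c + 2 [c odd] <= n + 2, hence the potential
   n g(DLB x) drops by at least 1 in expectation per iteration, and the
   additive drift bound gives E[T] <= 1 + n (n + 2). *)

From HB Require Import structures.
From mathcomp Require Import all_boot all_order all_algebra all_fingroup.
From mathcomp Require Import all_classical all_reals all_analysis.
From mathcomp Require Import zify lra.
Set Implicit Arguments. Unset Strict Implicit. Unset Printing Implicit Defensive.
Import Order.TTheory GRing.Theory Num.Theory.
Local Open Scope ring_scope.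

Lemma find_iota0_ge (P : pred nat) k m : (m <= k)%N ->
  (forall l, (l < m)%N -> ~~ P l) -> (m <= find P (iota 0 k))%N.
Proof.
move=> le_mk before; case: findP => [|i lt_ik Pi _]; first by rewrite size_iota.
rewrite size_iota in lt_ik; rewrite leqNgt; apply/negP => lt_im.
by move: (Pi 0); rewrite nth_iota // add0n (negbTE (before _ lt_im)).
Qed.

Lemma find_iota0_eq (P : pred nat) k m : (m < k)%N -> P m ->
  (forall l, (l < m)%N -> ~~ P l) -> find P (iota 0 k) = m.
Proof.
move=> lt_mk Pm before; apply/eqP; rewrite eqn_leq find_iota0_ge ?(ltnW lt_mk) // andbT.
by rewrite leqNgt; apply/negP => /(before_find 0); rewrite nth_iota // add0n Pm.
Qed.

Section AdditiveDrift.
Variables (R : realType) (n : nat) (A : alg11 R n) (f : bits n -> R).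
Variables (Inv : bits n -> seq R -> Prop) (pot : bits n -> R) (B : R).

Let next h x y := if accept A (rcons h (f y)) then y else x.

Hypothesis Inv_init : forall x, Inv x [:: f x].
Hypothesis Inv_next : forall h x y, Inv x h -> Inv (next h x y) (rcons h (f y)).
Hypothesis pot_ge0 : forall x, 0 <= pot x.
Hypothesis pot_le : forall x, pot x <= B.
Hypothesis pot_drift : forall h x, Inv x h -> ~~ is_opt f x ->
  \sum_y op A h x y * pot (next h x y) <= pot x - 1.

Lemma op_ge0 h x y : 0 <= op A h x y.
Proof. by case: (op_unbiased A h) => + _ _ _; apply. Qed.

Lemma run_states_inv t s : s \in run_states A f t ->
  [/\ 0 <= s.1, ~~ is_opt f s.2.1 & Inv s.2.1 s.2.2].
Proof.
elim: t s => [|t IH] s /=.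
  case/mapP => x; rewrite mem_filter => /andP[x_nopt _] ->.
  by split; rewrite //= invr_ge0 exprn_ge0 ?ler0n.
case/flatten_mapP => -[w [x h]] /IH[/= w_ge0 x_nopt Ixh].
case/mapP => y; rewrite mem_filter => /andP[y_nopt _] -> /=.
split; rewrite /= ?mulr_ge0 ?op_ge0 //; first by case: ifP.
exact: Inv_next.
Qed.

Lemma prob_not_found_ge0 t : 0 <= prob_not_found A f t.
Proof. by rewrite /prob_not_found big_seq sumr_ge0 // => s /run_states_inv[]. Qed.

Definition pot_mass t := \sum_(s <- run_states A f t) s.1 * pot s.2.1.

Lemma pot_mass_ge0 t : 0 <= pot_mass t.
Proof.
by rewrite /pot_mass big_seq sumr_ge0 // => s /run_states_inv[w_ge0 _ _]; rewrite mulr_ge0.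
Qed.

Lemma pot_mass0_le : pot_mass 0 <= B.
Proof.
have B_ge0 : 0 <= B by apply: le_trans (pot_le [ffun=> false]).
have card_bits : #|{: bits n}| = (2 ^ n)%N by rewrite card_ffun card_bool card_ord.
rewrite /pot_mass /= big_map big_filter.
apply: (@le_trans _ _ (\sum_(x <- enum {: bits n}) 2%:R ^- n * B)).
  rewrite big_mkcond /=; apply: ler_sum => x _; case: ifP => _.
    by rewrite ler_wpM2l ?invr_ge0 ?exprn_ge0.
  by rewrite mulr_ge0 ?invr_ge0 ?exprn_ge0.
rewrite big_enum /= sumr_const card_bits -[_ *+ _]mulr_natr natrX.
by rewrite mulrAC mulVf ?mul1r // expf_neq0 // pnatr_eq0.
Qed.

Lemma pot_mass_step t : pot_mass t.+1 + prob_not_found A f t <= pot_mass t.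
Proof.
rewrite /pot_mass /prob_not_found /= big_flatten /= big_map -big_split /=.
rewrite [leRHS]big_seq [leLHS]big_seq.
apply: ler_sum => -[w [x h]] /run_states_inv[/= w_ge0 x_nopt Ixh].
rewrite big_map big_filter /=.
apply: (@le_trans _ _ (w * \sum_y op A h x y * pot (next h x y) + w)).
  rewrite lerD2r big_mkcond /= big_enum /= mulr_sumr; apply: ler_sum => y _.
  by case: ifP => _; rewrite ?mulrA // !mulr_ge0 ?op_ge0.
have := ler_wpM2l w_ge0 (pot_drift Ixh x_nopt); lra.
Qed.

Lemma sum_prob_not_found_le N : \sum_(t < N) prob_not_found A f t <= B.
Proof.
suff : \sum_(t < N) prob_not_found A f t + pot_mass N <= pot_mass 0.
  have := pot_mass_ge0 N; have := pot_mass0_le; lra.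
elim: N => [|N IH]; first by rewrite big_ord0 add0r.
rewrite big_ord_recr /=; apply: le_trans IH.
have := pot_mass_step N; lra.
Qed.

Theorem expected_runtime_le : (expected_runtime A f <= (1 + B)%:E)%E.
Proof.
rewrite /expected_runtime EFinD leeD2l // ?lte_fin //.
apply: lime_le.
  by apply: is_cvg_nneseries => t _ _; rewrite lee_fin prob_not_found_ge0.
by apply: nearW => N; rewrite sumEFin lee_fin big_mkord sum_prob_not_found_le.
Qed.

End AdditiveDrift.

Section RandomizedLocalSearch.
Variable n : nat.

Definition flip (x : bits n) (i : 'I_n) : bits n :=
  [ffun j => if j == i then ~~ x j else x j].

Lemma flip_bxor (x z : bits n) i : flip (bxor x z) i = bxor (flip x i) z.
Proof. by apply/ffunP => j; rewrite !ffunE; case: (j == i); rewrite ?ffunE ?negb_add. Qed.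

Lemma flip_bperm (s : {perm 'I_n}) (x : bits n) i :
  flip (bperm s x) i = bperm s (flip x (s i)).
Proof. by apply/ffunP => j; rewrite !ffunE (inj_eq perm_inj). Qed.

Lemma bxorK (z : bits n) : involutive (fun x : bits n => bxor x z).
Proof. by move=> x; apply/ffunP => j; rewrite !ffunE -addbA addbb addbF. Qed.

Lemma bperm_inj (s : {perm 'I_n}) : injective (bperm s).
Proof.
move=> x y e; apply/ffunP => j.
by have := congr1 (fun z : bits n => z (s^-1 j)%g) e; rewrite !ffunE permKV.
Qed.

Variable R : realType.

Definition rls (x y : bits n) : R := n%:R^-1 * \sum_(i < n) (flip x i == y)%:R.

Lemma rls_sum (x : bits n) (F : bits n -> R) :
  \sum_y rls x y * F y = n%:R^-1 * \sum_i F (flip x i).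
Proof.
rewrite /rls; under eq_bigr do rewrite -mulrA.
rewrite -mulr_sumr; congr (_ * _).
under eq_bigr do rewrite mulr_suml.
rewrite exchange_big /=; apply: eq_bigr => i _.
rewrite (bigD1 (flip x i)) //= eqxx mul1r big1 ?addr0 // => y.
by rewrite eq_sym => /negbTE ->; rewrite mul0r.
Qed.

Lemma rls_unbiased : (0 < n)%N -> unary_unbiased rls.
Proof.
move=> n_gt0; split.
- by move=> x y; rewrite /rls mulr_ge0 ?invr_ge0 // sumr_ge0.
- move=> x; under eq_bigr do rewrite -[rls _ _]mulr1.
  rewrite rls_sum sumr_const card_ord -[_ *+ n]mulr_natr mul1r mulVf //.
  by rewrite pnatr_eq0 -lt0n.
- move=> x y z; rewrite /rls; congr (_ * _); apply: eq_bigr => i _.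
  by rewrite flip_bxor (inj_eq (can_inj (bxorK z))).
- move=> x y s; rewrite /rls; congr (_ * _).
  rewrite (reindex_inj (@perm_inj _ s)) /=; apply: eq_bigr => i _.
  by rewrite flip_bperm (inj_eq (@bperm_inj s)).
Qed.

Lemma mean_le_subr1 (G : 'I_n -> R) (P : R) i0 :
  (forall i, G i <= P) -> G i0 <= P - n%:R -> n%:R^-1 * \sum_i G i <= P - 1.
Proof.
have n_gt0 : (0 < n)%N by case: n i0 => [[]|].
move=> G_le G_i0; rewrite ler_pdivrMl ?ltr0n //.
suff : n%:R <= \sum_i (P - G i).
  by rewrite sumrB sumr_const card_ord -mulr_natr; lra.
rewrite (bigD1 i0) //=; apply: le_trans (_ : P - G i0 <= _); first lra.
by rewrite lerDl sumr_ge0 // => i _; rewrite subr_ge0.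
Qed.

End RandomizedLocalSearch.

Section DeceptiveLeadingBlocks.
Variable n : nat.
Implicit Types x : bits n.

Lemma bit_ord x (i : 'I_n) : bit x i = x i.
Proof. by rewrite /bit valK. Qed.

Lemma all_ones_bit x k : [forall i, x i] -> (k < n)%N -> bit x k.
Proof. by move=> /forallP all1 lt_kn; rewrite (bit_ord x (Ordinal lt_kn)). Qed.

Lemma bit_flip x i k :
  bit (flip x i) k = if k == val i then ~~ bit x k else bit x k.
Proof.
rewrite /bit; case: insubP => [j _ <-|/negbTE k_ge] /=; first by rewrite ffunE val_eqE.
by case: eqP k_ge => // ->; rewrite ltn_ord.
Qed.

Definition full_block x l := bit x l.*2 && bit x l.*2.+1.

Lemma full_blocks_all_ones x : ~~ odd n ->
  (forall l, (l < n./2)%N -> full_block x l) -> [forall i, x i].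
Proof.
move=> n_even full; apply/forallP => i; rewrite -bit_ord.
have lt_half : (i./2 < n./2)%N by rewrite ltn_half_double even_halfK.
have /andP[b0 b1] := full _ lt_half.
by have := odd_double_half i; case: (odd i) => /= <-.
Qed.

Lemma exists_first_gap x : ~~ odd n -> ~~ [forall i, x i] ->
  exists m, [/\ (m < n./2)%N, forall l, (l < m)%N -> full_block x l & ~~ full_block x m].
Proof.
move=> n_even not_all1; set P := fun l => ~~ full_block x l.
have has_gap : has P (iota 0 n./2).
  apply: contraR not_all1 => /hasPn no_gap; apply: full_blocks_all_ones => // l lt_l.
  by apply/negPn/no_gap; rewrite mem_iota.
have lt_gap := has_gap; rewrite has_find size_iota in lt_gap.
exists (find P (iota 0 n./2)); split => //.
  move=> l lt_l; have := before_find 0 lt_l.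
  by rewrite nth_iota ?add0n /P => [/negbFE|]; last exact: ltn_trans lt_gap.
by have := nth_find 0 has_gap; rewrite nth_iota.
Qed.

Lemma DLB_first_gap x m : (m < n./2)%N ->
  (forall l, (l < m)%N -> full_block x l) -> ~~ full_block x m ->
  DLB x = if ~~ bit x m.*2 && ~~ bit x m.*2.+1 then m.*2.+1 else m.*2.
Proof.
move=> lt_m full_before gap_m; rewrite /DLB.
have -> : [forall i, x i] = false.
  by apply: contraNF gap_m => all1; rewrite /full_block !all_ones_bit //; lia.
rewrite /= (@find_iota0_eq _ _ m) // => l lt_l.
by rewrite negbK; apply: full_before.
Qed.

Lemma DLB_ge x k : (k <= n./2)%N ->
  (forall l, (l < k)%N -> full_block x l) -> (k.*2 <= DLB x)%N.
Proof.
move=> le_k full_before; rewrite /DLB; case: ifP => _; first lia.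
have : (k <= find (fun l => ~~ (bit x l.*2 && bit x l.*2.+1)) (iota 0 n./2))%N.
  by apply: find_iota0_ge => // l lt_l; rewrite negbK; apply: full_before.
by case: ifP => _ /=; lia.
Qed.

Lemma DLB_le x : ~~ odd n -> (DLB x <= n)%N.
Proof.
move=> n_even; case: (boolP [forall i, x i]) => [all1|]; first by rewrite /DLB all1.
case/(exists_first_gap n_even) => m [lt_m full_before gap_m].
by rewrite (DLB_first_gap lt_m full_before gap_m); case: ifP => _; lia.
Qed.

Lemma flip_completes_block x m : (m < n./2)%N ->
  (forall l, (l < m)%N -> full_block x l) -> ~~ full_block x m ->
  bit x m.*2 || bit x m.*2.+1 -> exists i, (m.+1.*2 <= DLB (flip x i))%N.
Proof.
move=> lt_m full_before gap_m one_m.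
set j := if bit x m.*2 then m.*2.+1 else m.*2.
have lt_jn : (j < n)%N by rewrite /j; case: ifP => _; lia.
exists (Ordinal lt_jn); apply: DLB_ge => // l lt_l; rewrite /full_block !bit_flip /=.
have [lt_lm|->] : (l < m)%N \/ l = m by lia.
  have /andP[-> ->] := full_before _ lt_lm.
  by rewrite /j; case: (bit x m.*2); rewrite !ifN_eq //; lia.
have [ne1 ne2] : m.*2 != m.*2.+1 /\ m.*2.+1 != m.*2 by lia.
move: gap_m one_m; rewrite /j /full_block.
by case: (bit x m.*2); case: (bit x m.*2.+1);
  rewrite /= ?eqxx ?(ifN_eq _ _ ne1) ?(ifN_eq _ _ ne2).
Qed.

Lemma flip_halves_empty_block x m : (m < n./2)%N ->
  (forall l, (l < m)%N -> full_block x l) -> ~~ bit x m.*2 -> ~~ bit x m.*2.+1 ->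
  exists i, DLB (flip x i) = m.*2.
Proof.
move=> lt_m full_before b0 b1.
have lt_2m : (m.*2 < n)%N by lia.
have ne : m.*2.+1 != m.*2 by lia.
have [f0 f1] : bit (flip x (Ordinal lt_2m)) m.*2 /\ ~~ bit (flip x (Ordinal lt_2m)) m.*2.+1.
  by rewrite !bit_flip /= eqxx (ifN_eq _ _ ne).
exists (Ordinal lt_2m); rewrite (@DLB_first_gap _ m) //.
- by rewrite f0 (negbTE f1).
- move=> l lt_l; rewrite /full_block !bit_flip /= !ifN_eq; try lia.
  exact: full_before.
- by rewrite /full_block (negbTE f1) andbF.
Qed.

Definition dlb_accepts (c b : nat) : bool := (c.+2 <= b)%N || (odd c && (b.+1 == c)).

Lemma exists_accepted_flip x : ~~ odd n -> ~~ [forall i, x i] ->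
  exists i, dlb_accepts (DLB x) (DLB (flip x i)).
Proof.
move=> n_even /(exists_first_gap n_even) [m [lt_m full_before gap_m]].
rewrite (DLB_first_gap lt_m full_before gap_m).
case: ifP => [/andP[b0 b1] | one_m].
  have [i DLB_i] := flip_halves_empty_block lt_m full_before b0 b1.
  by exists i; rewrite DLB_i /dlb_accepts; lia.
have [|i le_i] := flip_completes_block lt_m full_before gap_m.
  by move: one_m; case: (bit x m.*2); case: (bit x m.*2.+1).
by exists i; rewrite /dlb_accepts; lia.
Qed.

Definition dlb_dist (v : nat) : nat := (n + 2 * odd v - v)%N.

Lemma dlb_dist_le v : (dlb_dist v <= n + 2)%N.
Proof. rewrite /dlb_dist; lia. Qed.

Lemma dlb_dist_decr c b : (c <= n)%N -> (b <= n)%N -> dlb_accepts c b ->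
  (dlb_dist b < dlb_dist c)%N.
Proof. rewrite /dlb_accepts /dlb_dist; lia. Qed.

End DeceptiveLeadingBlocks.

Section DLBAlgorithm.
Variables (R : realType) (n : nat).
Hypotheses (n_gt0 : (0 < n)%N) (n_even : ~~ odd n).

Definition accepts_fitness (c b : R) : bool := dlb_accepts (Num.truncn c) (Num.truncn b).

Definition replay_step (c b : R) : R := if accepts_fitness c b then b else c.

(* The algorithm only sees fitness values: it recovers the fitness of its
   current point by replaying its own acceptance decisions along the history. *)
Definition current_fitness (h : seq R) : R :=
  if h is a :: t then foldl replay_step a t else 0.

Definition dlb_accept (h : seq R) : bool :=
  if h is a :: t then accepts_fitness (current_fitness (belast a t)) (last a t) else false.

Lemma current_fitness_rcons h b : h != [::] ->
  current_fitness (rcons h b) = replay_step (current_fitness h) b.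
Proof. by case: h => // a t _ /=; rewrite foldl_rcons. Qed.

Lemma dlb_accept_rcons h b : dlb_accept (rcons h b) = accepts_fitness (current_fitness h) b.
Proof. by case: h => [|a t] //=; rewrite belast_rcons last_rcons. Qed.

Lemma accepts_fitness_nat (c b : nat) : accepts_fitness c%:R b%:R = dlb_accepts c b.
Proof. by rewrite /accepts_fitness !natrK. Qed.

Definition dlb_rls : alg11 R n :=
  @Alg11 R n (fun _ => rls R) dlb_accept (fun _ => rls_unbiased R n_gt0).

Definition dlb_pot (x : bits n) : R := (n * dlb_dist n (DLB x))%:R.

Lemma dlb_rls_drift (x : bits n) : ~~ [forall i, x i] ->
  \sum_y rls R x y * dlb_pot (if dlb_accepts (DLB x) (DLB y) then y else x)
    <= dlb_pot x - 1.
Proof.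
move=> not_all1; have [i0 acc_i0] := exists_accepted_flip n_even not_all1.
have decr i : dlb_accepts (DLB x) (DLB (flip x i)) ->
    (dlb_dist n (DLB (flip x i)) < dlb_dist n (DLB x))%N.
  by apply: dlb_dist_decr; apply: DLB_le.
rewrite rls_sum; apply: (mean_le_subr1 (i0 := i0)) => [i|].
  case: ifP => // /decr lt_dist; rewrite ler_nat leq_mul2l ltnW ?orbT //.
rewrite acc_i0 /dlb_pot lerBrDr -natrD ler_nat.
have := decr i0 acc_i0; nia.
Qed.

Lemma all_ones_is_opt (x : bits n) : [forall i, x i] -> is_opt (fun z => (DLB z)%:R : R) x.
Proof.
move=> all1; apply/forallP => z; rewrite ler_nat.
have -> : DLB x = n by rewrite /DLB all1.
exact: DLB_le.
Qed.

Lemma dlb_rls_expected_runtime :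
  (expected_runtime dlb_rls (fun x => (DLB x)%:R) <= (1 + (n * (n + 2))%:R)%:E)%E.
Proof.
apply: (expected_runtime_le
  (Inv := fun x h => h != [::] /\ current_fitness h = (DLB x)%:R) (pot := dlb_pot)).
- by [].
- move=> h x y [h_neq0 cur_h]; split; first by rewrite -size_eq0 size_rcons.
  rewrite current_fitness_rcons // /replay_step /= dlb_accept_rcons cur_h.
  by case: ifP.
- by move=> x; apply: ler0n.
- by move=> x; rewrite ler_nat leq_mul2l dlb_dist_le orbT.
- move=> h x [_ cur_h] x_nopt.
  under eq_bigr do rewrite /= dlb_accept_rcons cur_h accepts_fitness_nat.
  by apply: dlb_rls_drift; apply: contra x_nopt; apply: all_ones_is_opt.
Qed.

End DLBAlgorithm.

Theorem theorem11 (R : realType) :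
  exists (C : R) (n0 : nat), 0 < C /\
    forall n : nat, (n0 <= n)%N -> ~~ odd n -> (0 < n)%N ->
      exists A : alg11 R n,
        (expected_runtime A (fun x => (DLB x)%:R) <= (C * (n ^ 2)%:R)%:E)%E.
Proof.
exists 4, 0%N; split => [|n _ n_even n_gt0]; first lra.
exists (dlb_rls R n_gt0); apply: le_trans (dlb_rls_expected_runtime R n_gt0 n_even) _.
have : 1 <= n%:R :> R by rewrite ler1n.
rewrite lee_fin !natrM natrD; nra.
Qed.
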